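(* Let $\mathcal{H}_1,\mathcal{H}_2$ be Hilbert spaces and let $T:\mathcal{D}(T)\subseteq \mathcal{H}_1\to\mathcal{H}_2$ be a linear operator (not necessarily densely defined). Let $\mathcal{H}_T:=\overline{\mathcal{D}(T)}$ and let $T^{\times}:=(T|_{\mathcal{H}_T})^*$ be the canonical adjoint of $T$. Then $\mathcal{D}(T^{\times})=\mathcal{D}(T^* )$ (i.e. $T^\times$ has maximal domain) and $T^{\times}$ is closed. Moreover, the adjoints $S$ of $T$ with maximal domain, i.e. with $\mathcal{D}(S)=\mathcal{D}(T^* )$, are exactly the operators of the form $S=T^{\times}+U$, where $U:\mathcal{D}(T^{\times})\to\mathcal{H}_T^{\perp}$ is an arbitrary linear operator. In particular, $\|T^{\times}x\|\le\|Sx\|$ for every such adjoint $S$ and all $x\in\mathcal{D}(T^{\times})$.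
   Context: For a linear operator $T:\mathcal{D}(T)\subseteq\mathcal{H}_1\to\mathcal{H}_2$ with arbitrary domain, set $\mathcal{D}(T^* )=\{k\in\mathcal{H}_2:\ h\mapsto\langle Th,k\rangle \text{ is a bounded functional on } \mathcal{D}(T)\}$. A linear operator $S:\mathcal{D}(S)\subseteq\mathcal{H}_2\to\mathcal{H}_1$ is called an adjoint of $T$ if $\langle Th,k\rangle=\langle h,Sk\rangle$ for all $h\in\mathcal{D}(T)$, $k\in\mathcal{D}(S)$ (then necessarily $\mathcal{D}(S)\subseteq\mathcal{D}(T^* )$). $T|_{\mathcal{H}_T}$ denotes $T$ regarded as a densely defined operator from $\mathcal{D}(T)\subseteq\mathcal{H}_T$ into $\mathcal{H}_2$, and $(T|_{\mathcal{H}_T})^*:\mathcal{D}\subseteq\mathcal{H}_2\to\mathcal{H}_T\subseteq\mathcal{H}_1$ is its usual (unique) Hilbert space adjoint. *)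

(* Hilbert spaces are encoded as an lmodType over R[i] with an inner product
   (linear in the first argument, conjugate-linear in the second) that is
   complete for the induced norm.  Subsets are predicates V -> Prop; a
   (not necessarily everywhere defined) linear operator is a pair of a
   domain D (a linear subspace) and a function that is linear on D. *)
From mathcomp Require Import all_boot all_algebra.
From mathcomp Require Import reals complex.
From Stdlib Require Import ClassicalEpsilon.
Set Implicit Arguments. Unset Strict Implicit. Unset Printing Implicit Defensive.
Import GRing.Theory Num.Theory.
Local Open Scope ring_scope.

Section Hilbert.
Variable R : realType.
Local Notation C := (R[i]).

Section OneSpace.
Variable V : lmodType C.
Variable ip : V -> V -> C.

Definition inner_product : Prop :=
  [/\ (forall (a : C) (x y z : V), ip (a *: x + y) z = a * ip x z + ip y z),
      (forall x y : V, ip y x = Num.conj (ip x y)),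
      (forall x : V, 0 <= ip x x) &
      (forall x : V, ip x x = 0 -> x = 0)].

(* induced norm (a nonnegative real, viewed in C) *)
Definition vnorm (x : V) : C := sqrtC (ip x x).

Definition converges (u : nat -> V) (x : V) : Prop :=
  forall e : C, 0 < e -> exists N : nat, forall n, (N <= n)%N -> vnorm (u n - x) < e.

Definition cauchy_seq (u : nat -> V) : Prop :=
  forall e : C, 0 < e -> exists N : nat,
    forall m n, (N <= m)%N -> (N <= n)%N -> vnorm (u m - u n) < e.

Definition hilbert : Prop :=
  inner_product /\ forall u, cauchy_seq u -> exists x, converges u x.

Definition linear_subspace (D : V -> Prop) : Prop :=
  D 0 /\ forall (a : C) x y, D x -> D y -> D (a *: x + y).

Definition vclosure (D : V -> Prop) : V -> Prop :=
  fun x => exists u : nat -> V, (forall n, D (u n)) /\ converges u x.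

Definition orth (D : V -> Prop) : V -> Prop :=
  fun x => forall y, D y -> ip y x = 0.
End OneSpace.

Section Operators.
Variables (V1 V2 : lmodType C) (ip1 : V1 -> V1 -> C) (ip2 : V2 -> V2 -> C).

Definition linear_on (W1 W2 : lmodType C) (D : W1 -> Prop) (f : W1 -> W2) : Prop :=
  forall (a : C) x y, D x -> D y -> f (a *: x + y) = a *: f x + f y.

Definition adj_dom (D : V1 -> Prop) (T : V1 -> V2) : V2 -> Prop :=
  fun k => exists M : C, forall h, D h -> `|ip2 (T h) k| <= M * vnorm ip1 h.

Definition is_adjoint (D : V1 -> Prop) (T : V1 -> V2)
    (DS : V2 -> Prop) (S : V2 -> V1) : Prop :=
  [/\ linear_subspace DS, linear_on DS S &
      forall h k, D h -> DS k -> ip2 (T h) k = ip1 h (S k)].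

Definition closed_op (W1 W2 : lmodType C) (n1 : W1 -> W1 -> C) (n2 : W2 -> W2 -> C)
    (DS : W1 -> Prop) (S : W1 -> W2) : Prop :=
  forall (u : nat -> W1) x y, (forall n, DS (u n)) ->
    converges n1 u x -> converges n2 (fun n => S (u n)) y -> DS x /\ S x = y.

(* The canonical adjoint T^x := (T|_{H_T})^*, H_T = vclosure of D(T):
   the usual Hilbert-space adjoint of the densely defined operator
   T : D(T) subset H_T -> H2. *)
Definition canon_adj_dom (D : V1 -> Prop) (T : V1 -> V2) : V2 -> Prop :=
  fun k => exists y, vclosure ip1 D y /\ forall h, D h -> ip2 (T h) k = ip1 h y.

Definition canon_adj (D : V1 -> Prop) (T : V1 -> V2) (k : V2) : V1 :=
  epsilon (inhabits 0)
    (fun y => vclosure ip1 D y /\ forall h, D h -> ip2 (T h) k = ip1 h y).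
End Operators.
End Hilbert.

From mathcomp Require Import all_boot all_order all_algebra.
From mathcomp Require Import classical_sets reals complex.
From mathcomp Require Import ring.
From Stdlib Require Import ClassicalEpsilon FunctionalExtensionality PropExtensionality.
Set Implicit Arguments. Unset Strict Implicit. Unset Printing Implicit Defensive.
Import Order.TTheory GRing.Theory Num.Theory.
Local Open Scope ring_scope.

(* The heart of the matter is a Riesz representation theorem for a bounded
   functional f on a subspace D that need not be closed.  Minimizing the energy
   <z, z> - 2 Re f(z) over D yields, by the parallelogram law, a Cauchy
   sequence; its limit y lies in the closure of D, and the first variation of
   the energy at near-minimizers shows f(h) = <h, y> on D.  Applied to
   h |-> <T h, k> this gives D(T^x) = D(T^* ).  Vectors of the closure of D are
   determined by their inner products with D, which pins down T^x k, forces
   S k - T^x k into H_T^perp for any other adjoint S with maximal domain, and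
   makes T^x closed by passing to the limit in <T h, k_n> = <h, T^x k_n>.  The
   norm inequality is then Pythagoras. *)

Section NumField.
Variable F : numFieldType.

Definition sconverges (a : nat -> F) (l : F) : Prop :=
  forall e, 0 < e -> exists N, forall n, (N <= n)%N -> `|a n - l| < e.

Lemma eq0_lt_all (a : F) : 0 <= a -> (forall e, 0 < e -> a < e) -> a = 0.
Proof.
move=> a_ge0 a_small; apply/eqP; rewrite eq_le a_ge0 andbT.
by apply/ler_addgt0Pr => e e_gt0; rewrite add0r ltW ?a_small.
Qed.

Lemma sconverges_unique a l l' : sconverges a l -> sconverges a l' -> l = l'.
Proof.
move=> al al'; apply/eqP; rewrite -subr_eq0 -normr_eq0; apply/eqP.
apply: eq0_lt_all => // e e_gt0.
have e2_gt0 : 0 < e / 2%:R by rewrite divr_gt0 ?ltr0n.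
have [N1 h1] := al _ e2_gt0; have [N2 h2] := al' _ e2_gt0.
pose n := maxn N1 N2.
rewrite -(subrKA (a n)) addrC -opprB (splitr e).
apply: le_lt_trans (ler_normB _ _) _.
by rewrite ltrD ?h1 ?h2 ?leq_maxl ?leq_maxr.
Qed.

Lemma mul_lt_divD1 (c w e : F) : 0 <= c -> 0 <= w -> w < e / (c + 1) -> c * w < e.
Proof.
move=> c_ge0 w_ge0; rewrite ltr_pdivlMr ?ltr_wpDl //; apply: le_lt_trans.
by rewrite mulrDr mulr1 mulrC lerDl.
Qed.

Lemma quadratic_ge0_bound (x s P q : F) : 0 <= s -> 0 <= q -> s * P <= 1 ->
  0 <= x - 2%:R * s * q + s ^+ 2 * P * q -> s * q <= x.
Proof.
move=> s_ge0 q_ge0 sP_le1 h; rewrite -subr_ge0; apply: le_trans h _.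
have -> : x - 2%:R * s * q + s ^+ 2 * P * q = x - s * q - (1 - s * P) * (s * q) by ring.
by rewrite gerBl mulr_ge0 ?subr_ge0 ?mulr_ge0.
Qed.

End NumField.

Lemma add_conjC_le_norm (F : numClosedFieldType) (z : F) : z + z^* <= 2%:R * `|z|.
Proof.
have -> : z + z^* = 2%:R * 'Re z by rewrite ReE mulrC mulfVK // pnatr_eq0.
by rewrite ler_pM2l ?ltr0n // (leif_Re_Creal z).1.
Qed.

Section ComplexTolerance.
Variable R : realType.

Definition invS (n : nat) : R[i] := (n.+1%:R)^-1.

Lemma invS_gt0 n : 0 < invS n.
Proof. by rewrite invr_gt0 ltr0n. Qed.

Lemma invS_le1 n : invS n <= 1.
Proof. by rewrite invf_le1 ?ltr0n // ler1n. Qed.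

Lemma invS_eventually_lt (e : R[i]) : 0 < e ->
  exists N, forall n, (N <= n)%N -> invS n < e.
Proof.
move=> e_gt0; have e_real : e \is Num.real by apply: gtr0_real.
rewrite -(RRe_real e_real) ltcR in e_gt0 *.
exists (Num.bound (complex.Re e)^-1) => n le_Nn.
have lt_inv : (complex.Re e)^-1 < n.+1%:R.
  apply: lt_le_trans (archi_boundP _) _; first by rewrite invr_ge0 ltW.
  by rewrite ler_nat (leq_trans le_Nn).
rewrite /invS -(rmorph_nat (real_complex R)) -fmorphV ltcR.
by rewrite -(invrK (complex.Re e)) ltf_pV2 // posrE ?invr_gt0 // ltr0n.
Qed.

End ComplexTolerance.

Section InnerProduct.
Variables (R : realType) (V : lmodType R[i]) (ip : V -> V -> R[i]).
Hypothesis Hip : inner_product ip.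
Local Notation vnorm := (vnorm ip).

Lemma ipDl x y z : ip (x + y) z = ip x z + ip y z.
Proof. by case: Hip => lin _ _ _; have := lin 1 x y z; rewrite scale1r mul1r. Qed.

Lemma ip0l z : ip 0 z = 0.
Proof. by apply: (@addrI _ (ip 0 z)); rewrite -ipDl !addr0. Qed.

Lemma ipZl a x z : ip (a *: x) z = a * ip x z.
Proof. by case: Hip => lin _ _ _; rewrite -[a *: x]addr0 lin ip0l addr0. Qed.

Lemma ipC x y : ip y x = (ip x y)^*.
Proof. by case: Hip. Qed.

Lemma ipNl x z : ip (- x) z = - ip x z.
Proof. by rewrite -scaleN1r ipZl mulN1r. Qed.

Lemma ipBl x y z : ip (x - y) z = ip x z - ip y z.
Proof. by rewrite ipDl ipNl. Qed.

Lemma ipDr x y z : ip z (x + y) = ip z x + ip z y.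
Proof. by rewrite ipC ipDl rmorphD /= -!ipC. Qed.

Lemma ipZr a x z : ip z (a *: x) = a^* * ip z x.
Proof. by rewrite ipC ipZl rmorphM /= -!ipC. Qed.

Lemma ip0r z : ip z 0 = 0.
Proof. by rewrite ipC ip0l rmorph0 /=. Qed.

Lemma ipNr x z : ip z (- x) = - ip z x.
Proof. by rewrite ipC ipNl rmorphN /= -ipC. Qed.

Lemma ipBr x y z : ip z (x - y) = ip z x - ip z y.
Proof. by rewrite ipDr ipNr. Qed.

Lemma ip_ge0 x : 0 <= ip x x.
Proof. by case: Hip => _ _ ge0 _; apply: ge0. Qed.

Lemma ip_eq0 x : ip x x = 0 -> x = 0.
Proof. by case: Hip => _ _ _; apply. Qed.

Lemma ip_gt0 x : x != 0 -> 0 < ip x x.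
Proof.
by move=> x_neq0; rewrite lt_def ip_ge0 andbT; apply: contra_neq x_neq0 => /ip_eq0.
Qed.

Lemma vnorm_ge0 x : 0 <= vnorm x.
Proof. by rewrite sqrtC_ge0 ip_ge0. Qed.

Lemma sqr_vnorm x : vnorm x ^+ 2 = ip x x.
Proof. by rewrite /vnorm sqrtCK. Qed.

Lemma vnorm0 : vnorm 0 = 0.
Proof. by rewrite /vnorm ip0l sqrtC0. Qed.

Lemma vnormZ a x : vnorm (a *: x) = `|a| * vnorm x.
Proof.
rewrite /vnorm ipZl ipZr mulrA -normCK sqrtCM ?nnegrE ?exprn_ge0 ?ip_ge0 //.
by rewrite sqrCK.
Qed.

(* The residual x - (ip x y / ip y y) y has nonnegative square norm. *)
Lemma cauchy_schwarz x y : `|ip x y| <= vnorm x * vnorm y.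
Proof.
rewrite -(@ler_pXn2r _ 2) ?nnegrE ?mulr_ge0 ?vnorm_ge0 // exprMn !sqr_vnorm.
have [->|y_neq0] := eqVneq y 0; first by rewrite ip0r normr0 expr0n ip0r mulr0.
have y_gt0 := ip_gt0 y_neq0.
have := ip_ge0 (x - (ip x y / ip y y) *: y).
rewrite ipBl !ipBr !ipZl !ipZr rmorphM fmorphV /= (ipC x y) (geC0_conj (ip_ge0 y)).
rewrite [X in 0 <= X -> _](_ : _ = ip x x - ip x y * (ip x y)^* / ip y y).
  by rewrite subr_ge0 ler_pdivrMr // -normCK mulrC.
by field; rewrite gt_eqF.
Qed.

Lemma vnormD x y : vnorm (x + y) <= vnorm x + vnorm y.
Proof.
rewrite -(@ler_pXn2r _ 2) ?nnegrE ?addr_ge0 ?vnorm_ge0 //.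
rewrite sqrrD !sqr_vnorm ipDl !ipDr (ipC x y).
have -> : ip x x + ip x y + ((ip x y)^* + ip y y)
    = ip x x + ip y y + (ip x y + (ip x y)^*) by ring.
have -> : ip x x + vnorm x * vnorm y *+ 2 + ip y y
    = ip x x + ip y y + 2%:R * (vnorm x * vnorm y) by ring.
rewrite lerD2l; apply: le_trans (add_conjC_le_norm _) _.
by rewrite ler_pM2l ?ltr0n // cauchy_schwarz.
Qed.

Lemma vnorm_le_orthD x y : ip x y = 0 -> vnorm x <= vnorm (x + y).
Proof.
move=> xy0; rewrite -(@ler_pXn2r _ 2) ?nnegrE ?vnorm_ge0 // !sqr_vnorm.
by rewrite ipDl !ipDr (ipC x y) xy0 conjC0 addr0 add0r lerDl ip_ge0.
Qed.

Lemma converges_cst x : converges ip (fun=> x) x.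
Proof. by move=> e e_gt0; exists 0%N => n _; rewrite subrr vnorm0. Qed.

Lemma convergesD u v x y : converges ip u x -> converges ip v y ->
  converges ip (fun n => u n + v n) (x + y).
Proof.
move=> ux vy e e_gt0.
have e2_gt0 : 0 < e / 2%:R by rewrite divr_gt0 ?ltr0n.
have [N1 h1] := ux _ e2_gt0; have [N2 h2] := vy _ e2_gt0.
exists (maxn N1 N2) => n; rewrite geq_max => /andP[le1 le2].
rewrite opprD addrACA (splitr e); apply: le_lt_trans (vnormD _ _) _.
by rewrite ltrD ?h1 ?h2.
Qed.

Lemma convergesZ a u x : converges ip u x ->
  converges ip (fun n => a *: u n) (a *: x).
Proof.
move=> ux e e_gt0.
have [N h] := ux _ (divr_gt0 e_gt0 (ltr_wpDl (normr_ge0 a) ltr01)).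
by exists N => n le_Nn; rewrite -scalerBr vnormZ mul_lt_divD1 ?vnorm_ge0 ?h.
Qed.

Lemma converges_ipl u x z : converges ip u x ->
  sconverges (fun n => ip (u n) z) (ip x z).
Proof.
move=> ux e e_gt0.
have [N h] := ux _ (divr_gt0 e_gt0 (ltr_wpDl (vnorm_ge0 z) ltr01)).
exists N => n le_Nn; rewrite -ipBl; apply: le_lt_trans (cauchy_schwarz _ _) _.
by rewrite mulrC mul_lt_divD1 ?vnorm_ge0 ?h.
Qed.

Lemma converges_ipr u x z : converges ip u x ->
  sconverges (fun n => ip z (u n)) (ip z x).
Proof.
move=> ux e e_gt0; have [N h] := converges_ipl z ux e_gt0.
by exists N => n /h; rewrite (ipC (u n)) (ipC x) -rmorphB /= norm_conjC.
Qed.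

Lemma sub_vclosure (D : V -> Prop) x : D x -> vclosure ip D x.
Proof. by move=> Dx; exists (fun=> x); split=> //; apply: converges_cst. Qed.

Lemma linear_subspace_vclosure (D : V -> Prop) :
  linear_subspace D -> linear_subspace (vclosure ip D).
Proof.
case=> D0 DD; split; first exact: sub_vclosure.
move=> a x y [u [Du ux]] [v [Dv vy]].
exists (fun n => a *: u n + v n); split; first by move=> n; apply: DD.
exact/convergesD/vy/convergesZ.
Qed.

Lemma vclosure_closed (D : V -> Prop) x :
  vclosure ip (vclosure ip D) x -> vclosure ip D x.
Proof.
move=> [u [Du ux]].
have [v hv] : exists v : nat -> V, forall n, D (v n) /\ vnorm (v n - u n) < invS R n.
  apply: (ClassicalEpsilon.choice (fun n w => D w /\ vnorm (w - u n) < invS R n)) => n.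
  have [w [Dw wu]] := Du n; have [N h] := wu _ (invS_gt0 R n).
  by exists (w N); split; last exact: h.
exists v; split=> [n|e e_gt0]; first by case: (hv n).
have e2_gt0 : 0 < e / 2%:R by rewrite divr_gt0 ?ltr0n.
have [N1 h1] := invS_eventually_lt e2_gt0; have [N2 h2] := ux _ e2_gt0.
exists (maxn N1 N2) => n; rewrite geq_max => /andP[le1 le2].
rewrite -(subrKA (u n)) (splitr e); apply: le_lt_trans (vnormD _ _) _.
by rewrite ltrD ?h2 // (lt_trans (hv n).2) ?h1.
Qed.

Lemma orth_vclosure (D : V -> Prop) z :
  (forall h, D h -> ip h z = 0) -> orth ip (vclosure ip D) z.
Proof.
move=> Dz y [u [Du uy]]; apply: sconverges_unique (converges_ipl z uy) _.
by move=> e e_gt0; exists 0%N => n _; rewrite Dz // subrr normr0.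
Qed.

Lemma vclosure_ipr_inj (D : V -> Prop) y y' : linear_subspace D ->
  vclosure ip D y -> vclosure ip D y' ->
  (forall h, D h -> ip h y = ip h y') -> y = y'.
Proof.
move=> HD Dy Dy' yy'; apply/eqP; rewrite -subr_eq0; apply/eqP/ip_eq0.
apply: (orth_vclosure (D := D)) => [h Dh|]; first by rewrite ipBr yy' ?subrr.
have [_ lin] := linear_subspace_vclosure HD.
by rewrite -scaleN1r addrC; apply: lin.
Qed.

End InnerProduct.

Section Riesz.
Variables (R : realType) (V : lmodType R[i]) (ip : V -> V -> R[i]).
Hypotheses (Hip : inner_product ip)
  (Hc : forall u, cauchy_seq ip u -> exists x, converges ip u x).
Variables (D : V -> Prop) (f : V -> R[i]) (M : R[i]).
Hypotheses (HD : linear_subspace D)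
  (Hf : forall a x y, D x -> D y -> f (a *: x + y) = a * f x + f y)
  (HM : forall h, D h -> `|f h| <= M * vnorm ip h).

Let DZ a x : D x -> D (a *: x).
Proof. by case: HD => D0 lin Dx; rewrite -[_ *: _]addr0; apply: lin. Qed.

Let f0 : f 0 = 0.
Proof.
case: HD => D0 _; have := Hf 1 D0 D0; rewrite scale1r addr0 mul1r => f00.
by apply: (@addrI _ (f 0)); rewrite addr0 -f00.
Qed.

Let fZ a x : D x -> f (a *: x) = a * f x.
Proof. by case: HD => D0 _ Dx; rewrite -[_ *: _]addr0 Hf // f0 addr0. Qed.

Definition energy (z : V) : R[i] := ip z z - (f z + (f z)^*).

Lemma energy_real z : energy z \is Num.real.
Proof.
by rewrite rpredB ?(ger0_real (ip_ge0 Hip z)) // CrealE rmorphD /= conjCK addrC.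
Qed.

Lemma energy_lb z : D z -> - `|M| ^+ 2 <= energy z.
Proof.
move=> Dz.
have fz : f z + (f z)^* <= 2%:R * (`|M| * vnorm ip z).
  apply: le_trans (add_conjC_le_norm _) _; rewrite ler_pM2l ?ltr0n //.
  have Mz_real := ger0_real (le_trans (normr_ge0 _) (HM Dz)).
  apply: le_trans (HM Dz) (le_trans (real_ler_norm Mz_real) _).
  by rewrite normrM (ger0_norm (vnorm_ge0 Hip z)).
apply: le_trans (_ : _ <= vnorm ip z ^+ 2 - 2%:R * (`|M| * vnorm ip z)) _.
  rewrite -subr_ge0 (_ : _ - _ = (vnorm ip z - `|M|) ^+ 2); last by ring.
  by rewrite real_exprn_even_ge0 // rpredB ?normr_real ?ger0_real ?vnorm_ge0.
by rewrite /energy -sqr_vnorm // lerD2l lerN2.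
Qed.

Definition energy_inf : R := inf [set complex.Re (energy z) | z in D]%classic.

Let energyE z : ((complex.Re (energy z))%:C)%C = energy z.
Proof. exact: RRe_real (energy_real z). Qed.

Let has_inf_energy : has_inf [set complex.Re (energy z) | z in D]%classic.
Proof.
split; first by exists (complex.Re (energy 0)), 0; case: HD.
exists (complex.Re (- `|M| ^+ 2)) => _ [z Dz <-].
rewrite -lecR energyE RRe_real ?energy_lb //.
by rewrite rpredN rpredX ?normr_real.
Qed.

Definition excess (z : V) : R[i] := energy z - (energy_inf%:C)%C.

Lemma excess_ge0 z : D z -> 0 <= excess z.
Proof.
move=> Dz; rewrite subr_ge0 -energyE lecR.
by apply: ge_inf; [case: has_inf_energy | exists z].
Qed.

Lemma excess_small e : 0 < e -> exists2 z, D z & excess z < e.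
Proof.
move=> e_gt0; have e_real : e \is Num.real by apply: gtr0_real.
rewrite -(RRe_real e_real) ltcR in e_gt0 *.
have [_ [z Dz <-] lt_inf] := inf_adherent e_gt0 has_inf_energy.
by exists z; rewrite // ltrBlDl -energyE -rmorphD ltcR.
Qed.

Lemma ip_sub_le_excess a c : D a -> D c ->
  ip (a - c) (a - c) <= 2%:R * (excess a + excess c).
Proof.
move=> Da Dc; set mid := 2%:R^-1 *: a + 2%:R^-1 *: c.
have Dmid : D mid by case: HD => _ lin; apply/lin/DZ.
have parallelogram : ip (a - c) (a - c)
    = 2%:R * (excess a + excess c) - 4%:R * excess mid.
  rewrite /excess /energy /mid Hf ?fZ //; last exact: DZ.
  rewrite !(ipDl Hip, ipDr Hip, ipNl Hip, ipNr Hip, ipZl Hip, ipZr Hip).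
  rewrite !(rmorphD, rmorphM) /= fmorphV /= conjC_nat.
  by field.
by rewrite parallelogram gerBl mulr_ge0 ?ler0n ?excess_ge0.
Qed.

Lemma energy_shift t h w : D h -> D w ->
  energy (t *: h + w) = energy w + (t * (ip h w - f h) + (t * (ip h w - f h))^*)
                        + t * t^* * ip h h.
Proof.
move=> Dh Dw; rewrite /energy Hf //.
rewrite !(ipDl Hip, ipDr Hip, ipZl Hip, ipZr Hip) (ipC Hip h w).
by rewrite !(rmorphD, rmorphM, rmorphB) /=; ring.
Qed.

(* Moving a near-minimizer w in the direction h must not lower the energy much,
   which forces ip h w to be close to f h. *)
Lemma near_min_defect h w s : D h -> D w -> 0 < s -> s <= 1 ->
  excess w < s ^+ 2 -> `|ip h w - f h| ^+ 2 < s * (1 + ip h h).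
Proof.
move=> Dh Dw s_gt0 s_le1 small_w.
set g := ip h w - f h; set P := ip h h.
have P_ge0 : 0 <= P by apply: ip_ge0.
have P1_gt0 : 0 < 1 + P by rewrite ltr_pwDl.
set r := s / (1 + P).
have r_gt0 : 0 < r by rewrite divr_gt0.
have rP_le1 : r * P <= 1.
  rewrite mulrAC ler_pdivrMr // mul1r.
  by apply: le_trans (ler_piMl P_ge0 s_le1) _; rewrite lerDr.
have sP_eq : s * (1 + P) = r^-1 * s ^+ 2.
  by rewrite /r; field; rewrite !gt_eqF.
clearbody r.
set t := - (r * g^*).
have Dt : D (t *: h + w) by case: HD => _; apply.
have := excess_ge0 Dt; rewrite /excess energy_shift // -/g -/P.
rewrite [X in 0 <= X](_ : _ = excess w - 2%:R * r * (g * g^*) + r ^+ 2 * P * (g * g^*)).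
  move=> /(quadratic_ge0_bound (ltW r_gt0) (mul_conjC_ge0 g) rP_le1).
  move=> /le_lt_trans /(_ small_w); rewrite -normCK.
  by rewrite sP_eq ltr_pdivlMl.
rewrite /excess /t !(rmorphN, rmorphM) /= conjCK (geC0_conj (ltW r_gt0)).
by ring.
Qed.

Definition minimizing (z : nat -> V) : Prop :=
  forall n, D (z n) /\ excess (z n) < invS R n ^+ 2.

Lemma exists_minimizing : exists z, minimizing z.
Proof.
apply: (ClassicalEpsilon.choice (fun n w => D w /\ excess w < invS R n ^+ 2)) => n.
by have [w Dw small_w] := excess_small (exprn_gt0 2 (invS_gt0 R n)); exists w.
Qed.

Lemma minimizing_cauchy z : minimizing z -> cauchy_seq ip z.
Proof.
move=> min_z e e_gt0.
have e2_gt0 : 0 < e / 2%:R by rewrite divr_gt0 ?ltr0n.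
have [N small] := invS_eventually_lt e2_gt0.
have small2 n : (N <= n)%N -> excess (z n) < (e / 2%:R) ^+ 2.
  move=> /small lt_n; apply: lt_trans (min_z n).2 _.
  by rewrite ltr_pXn2r ?nnegrE ?ltW ?invS_gt0.
exists N => p q le_Np le_Nq.
rewrite -(@ltr_pXn2r _ 2) ?nnegrE ?vnorm_ge0 ?ltW // sqr_vnorm //.
apply: le_lt_trans (ip_sub_le_excess (min_z p).1 (min_z q).1) _.
rewrite [X in _ < X](_ : _ = 2%:R * ((e / 2%:R) ^+ 2 + (e / 2%:R) ^+ 2)); last by field.
by rewrite ltr_pM2l ?ltr0n // ltrD ?small2.
Qed.

Lemma minimizing_represents z h : minimizing z -> D h ->
  sconverges (fun n => ip h (z n)) (f h).
Proof.
move=> min_z Dh e e_gt0.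
have P1_gt0 : 0 < 1 + ip h h by rewrite ltr_pwDl ?ip_ge0.
have [N small] := invS_eventually_lt (divr_gt0 (exprn_gt0 2 e_gt0) P1_gt0).
exists N => n /small lt_n.
rewrite -(@ltr_pXn2r _ 2) ?nnegrE ?normr_ge0 ?ltW //.
have [Dzn small_zn] := min_z n.
apply: lt_trans (near_min_defect Dh Dzn (invS_gt0 R n) (invS_le1 R n) small_zn) _.
by rewrite -ltr_pdivlMr.
Qed.

Theorem riesz_representation : exists2 y, vclosure ip D y & forall h, D h -> f h = ip h y.
Proof.
have [z min_z] := exists_minimizing.
have [y zy] := Hc (minimizing_cauchy min_z).
exists y; first by exists z; split=> // n; case: (min_z n).
move=> h Dh.
exact: sconverges_unique (minimizing_represents min_z Dh) (converges_ipr Hip h zy).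
Qed.

End Riesz.

Section CanonicalAdjoint.
Variables (R : realType) (V1 V2 : lmodType R[i]).
Variables (ip1 : V1 -> V1 -> R[i]) (ip2 : V2 -> V2 -> R[i]).
Variables (D : V1 -> Prop) (T : V1 -> V2).
Hypotheses (Hip1 : inner_product ip1) (Hip2 : inner_product ip2).
Hypotheses (HD : linear_subspace D) (HT : linear_on D T).

Local Notation Dx := (canon_adj_dom ip1 ip2 D T).
Local Notation Tx := (canon_adj ip1 ip2 D T).

Lemma canon_adjP k : Dx k ->
  vclosure ip1 D (Tx k) /\ forall h, D h -> ip2 (T h) k = ip1 h (Tx k).
Proof. exact: epsilon_spec. Qed.

Lemma canon_adj_eq k y : Dx k -> vclosure ip1 D y ->
  (forall h, D h -> ip2 (T h) k = ip1 h y) -> Tx k = y.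
Proof.
move=> Dk Dy Tk; have [DTk TTk] := canon_adjP Dk.
by apply: (vclosure_ipr_inj Hip1 HD DTk Dy) => h Dh; rewrite -TTk ?Tk.
Qed.

Lemma canon_adj_domE :
  (forall u, cauchy_seq ip1 u -> exists x, converges ip1 u x) ->
  Dx = adj_dom ip1 ip2 D T.
Proof.
move=> Hc1; apply: functional_extensionality => k.
apply: propositional_extensionality; split=> [[y [Dy Tk]]|[M bounded]].
  by exists (vnorm ip1 y) => h Dh; rewrite Tk // mulrC; apply: cauchy_schwarz.
have Tlin a x y : D x -> D y -> ip2 (T (a *: x + y)) k = a * ip2 (T x) k + ip2 (T y) k.
  by move=> Dx Dy; rewrite HT // ipDl // ipZl.
by have [y Dy Tk] := riesz_representation Hip1 Hc1 HD Tlin bounded; exists y.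
Qed.

Lemma linear_subspace_canon_adj_dom : linear_subspace Dx.
Proof.
have [_ lin] := linear_subspace_vclosure Hip1 HD.
split; first by exists 0; split=> [|h _]; rewrite ?ip0r //; apply: sub_vclosure; case: HD.
move=> a k1 k2 [y1 [Dy1 Tk1]] [y2 [Dy2 Tk2]].
exists (a *: y1 + y2); split; first exact: lin.
by move=> h Dh; rewrite ipDr // ipZr // ipDr // ipZr // Tk1 ?Tk2.
Qed.

Lemma linear_canon_adj : linear_on Dx Tx.
Proof.
move=> a k1 k2 Dk1 Dk2.
have [Dy1 Tk1] := canon_adjP Dk1; have [Dy2 Tk2] := canon_adjP Dk2.
apply: canon_adj_eq.
- by case: linear_subspace_canon_adj_dom => _; apply.
- by case: (linear_subspace_vclosure Hip1 HD) => _; apply.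
- by move=> h Dh; rewrite ipDr // ipZr // ipDr // ipZr // Tk1 ?Tk2.
Qed.

Lemma canon_adj_is_adjoint : is_adjoint ip1 ip2 D T Dx Tx.
Proof.
split; [exact: linear_subspace_canon_adj_dom | exact: linear_canon_adj |].
by move=> h k Dh /canon_adjP[_]; apply.
Qed.

Lemma canon_adj_closed : closed_op ip2 ip1 Dx Tx.
Proof.
move=> u k y Du uk Tuy.
have Dy : vclosure ip1 D y.
  apply: (vclosure_closed Hip1); exists (fun n => Tx (u n)).
  by split=> // n; case: (canon_adjP (Du n)).
have Tk h : D h -> ip2 (T h) k = ip1 h y.
  move=> Dh; apply: sconverges_unique (converges_ipr Hip2 (T h) uk) _.
  move=> e /(converges_ipr Hip1 h Tuy) [N near_y].
  by exists N => n /near_y; rewrite (canon_adjP (Du n)).2.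
have Dk : Dx k by exists y.
by split=> //; apply: canon_adj_eq.
Qed.

Lemma adjoint_canon_adjP S : is_adjoint ip1 ip2 D T Dx S <->
  exists U, [/\ linear_on Dx U, (forall k, Dx k -> orth ip1 (vclosure ip1 D) (U k))
              & (forall k, Dx k -> S k = Tx k + U k)].
Proof.
have [_ linDx] := linear_subspace_canon_adj_dom.
split=> [[_ linS adjS]|[U [linU orthU eqS]]].
  exists (fun k => S k - Tx k).
  split=> [a k1 k2 Dk1 Dk2||k _]; last by rewrite addrC subrK.
    by rewrite linS // linear_canon_adj // scalerBr opprD addrACA.
  move=> k Dk; apply: orth_vclosure => // h Dh.
  by rewrite ipBr // -adjS // -(canon_adjP Dk).2 // subrr.
split=> [|a k1 k2 Dk1 Dk2|h k Dh Dk]; first exact: linear_subspace_canon_adj_dom.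
  have Dk := linDx a _ _ Dk1 Dk2.
  by rewrite !eqS // linear_canon_adj // linU // scalerDr addrACA.
rewrite eqS // ipDr // -(canon_adjP Dk).2 //.
by rewrite (orthU k Dk h (sub_vclosure Hip1 Dh)) addr0.
Qed.

Lemma canon_adj_min_norm S : is_adjoint ip1 ip2 D T Dx S ->
  forall k, Dx k -> vnorm ip1 (Tx k) <= vnorm ip1 (S k).
Proof.
move=> /adjoint_canon_adjP[U [_ orthU eqS]] k Dk.
by rewrite eqS // vnorm_le_orthD // (orthU k Dk _ (canon_adjP Dk).1).
Qed.


End CanonicalAdjoint.

Theorem theorem3p2 (R : realType) (V1 V2 : lmodType R[i])
    (ip1 : V1 -> V1 -> R[i]) (ip2 : V2 -> V2 -> R[i])
    (D : V1 -> Prop) (T : V1 -> V2) :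
  hilbert ip1 -> hilbert ip2 ->
  linear_subspace D -> linear_on D T ->
  let Dx := canon_adj_dom ip1 ip2 D T in
  let Tx := canon_adj ip1 ip2 D T in
  (* D(T^x) = D(T^* ) *)
  Dx = adj_dom ip1 ip2 D T /\
  (* T^x is closed *)
  closed_op ip2 ip1 Dx Tx /\
  (* T^x is an adjoint of T *)
  is_adjoint ip1 ip2 D T Dx Tx /\
  (* adjoints with maximal domain are exactly T^x + U, U : D(T^x) -> H_T^perp linear *)
  (forall (S : V2 -> V1),
     is_adjoint ip1 ip2 D T (adj_dom ip1 ip2 D T) S <->
     exists U : V2 -> V1,
       [/\ linear_on Dx U,
           (forall x, Dx x -> orth ip1 (vclosure ip1 D) (U x)) &
           (forall x, Dx x -> S x = Tx x + U x)]) /\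
  (* minimality of the norm *)
  (forall (S : V2 -> V1),
     is_adjoint ip1 ip2 D T (adj_dom ip1 ip2 D T) S ->
     forall x, Dx x -> vnorm ip1 (Tx x) <= vnorm ip1 (S x)).
Proof.
move=> [Hip1 complete1] [Hip2 _] HD HT Dx Tx.
rewrite -(canon_adj_domE Hip1 Hip2 HD HT complete1).
split=> //; split; first exact: canon_adj_closed.
split; first exact: canon_adj_is_adjoint.
split=> S; first exact: adjoint_canon_adjP.
exact: canon_adj_min_norm.
Qed.
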